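(* Let $\mathcal{F}$ be a hypothesis class of functions $\mathcal{X}\to\{\pm1\}$, $\mathcal{P}$ a distribution on $\mathcal{X}\times\{\pm1\}$, and $G\subseteq\mathcal{F}$. If a true risk minimizer $f^*$ of $\mathcal{P}$ (i.e. a minimizer of $R_{\mathcal{P}}$ over $\mathcal{F}$) belongs to $G$, then $f^*$ is also a true risk minimizer under the distribution $\mathcal{P}(G)$, i.e. $f^*$ minimizes $R_{\mathcal{P}(G)}$ over $\mathcal{F}$.
   Context: $AGR(G)=\{x\in\mathcal{X}:f_1(x)=f_2(x)\ \forall f_1,f_2\in G\}$. $\mathcal{P}(G)$ is the distribution of $(X,Y')$ where $(X,Y)\sim\mathcal{P}$ and $Y'$ is the common value of the functions of $G$ at $X$ if $X\in AGR(G)$, and $Y'=Y$ otherwise. $R_{\mathcal{P}}(f)=\Pr_{\mathcal{P}}[f(X)\ne Y]$, $R_{\mathcal{P}(G)}(f)=\Pr_{\mathcal{P}(G)}[f(X)\ne Y']$. (In the paper $G$ is a low-error set $G_t$ produced by the Active-ILESS algorithm, which relabels examples in $AGR(G_t)$ by the unanimous value.) *)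

From HB Require Import structures.
From mathcomp Require Import all_boot all_order all_algebra.
From mathcomp Require Import all_classical all_reals all_analysis.
Set Implicit Arguments. Unset Strict Implicit. Unset Printing Implicit Defensive.
Import Order.TTheory GRing.Theory Num.Theory.
Local Open Scope classical_set_scope.
Local Open Scope ring_scope.

(* Labels {-1,+1} are represented by bool (true = +1, false = -1). *)

Definition AGR (X : Type) (G : set (X -> bool)) : set X :=
  [set x | forall f1 f2, G f1 -> G f2 -> f1 x = f2 x].

Definition relabel (X : Type) (G : set (X -> bool)) (z : X * bool) : X * bool :=
  if `[< AGR G z.1 /\ exists f, G f >]
  then (z.1, xget true [set b | exists2 f, G f & f z.1 = b])
  else z.

(* The distribution P(G) = law of (X, Y') = pushforward of P along relabel. *)
Definition relabel_dist d (X : measurableType d) (R : realType)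
  (P : probability (X * bool)%type R) (G : set (X -> bool))
  (A : set (X * bool)) : \bar R :=
  P (relabel G @^-1` A).

Definition risk (X : Type) (R : realType) (Q : set (X * bool) -> \bar R)
  (f : X -> bool) : \bar R :=
  Q [set z | f z.1 != z.2].

Definition risk_minimizer (X : Type) (R : realType)
  (Q : set (X * bool) -> \bar R) (F : set (X -> bool)) (f : X -> bool) :=
  F f /\ forall g, F g -> (risk Q f <= risk Q g)%E.

From HB Require Import structures.
From mathcomp Require Import all_boot all_order all_algebra.
From mathcomp Require Import all_classical all_reals all_analysis.
Set Implicit Arguments. Unset Strict Implicit. Unset Printing Implicit Defensive.
Local Open Scope classical_set_scope.
Local Open Scope ring_scope.
Import Order.TTheory GRing.Theory Num.Theory.

(* On A := AGR(G) x bool, P(G) labels every example by fstar, so the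
   P(G)-risk of f is the mass of A where f disagrees with fstar plus the
   P-error mass of f off A; for f = fstar the first term vanishes.  On A, f
   errs only where fstar errs or where f and fstar disagree, so comparing the
   P-risks of fstar and f and cancelling the finite on-A error of fstar gives
   the claim. *)

Definition error_set (X : Type) (f : X -> bool) : set (X * bool) :=
  [set z | f z.1 != z.2].

Lemma measurable_neq d (T : measurableType d) (f g : T -> bool) :
  measurable_fun setT f -> measurable_fun setT g ->
  measurable [set t | f t != g t].
Proof.
move=> mf mg.
have mpre (h : T -> bool) b : measurable_fun setT h -> measurable (h @^-1` [set b]).
  by move=> mh; rewrite -[_ @^-1` _]setTI; exact: mh.
have -> : [set t | f t != g t] =
    (f @^-1` [set true] `&` g @^-1` [set false]) `|`
    (f @^-1` [set false] `&` g @^-1` [set true]).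
  apply/seteqP; split=> t /=; case: (f t); case: (g t) => //=;
    by [left | right | case=> -[]].
by apply: measurableU; apply: measurableI; exact: mpre.
Qed.

Lemma measure_setICU d (T : measurableType d) (R : realType)
    (mu : {measure set T -> \bar R}) (A B C : set T) :
  measurable A -> measurable B -> measurable C ->
  mu ((A `&` B) `|` (~` A `&` C)) = (mu (A `&` B) + mu (~` A `&` C))%E.
Proof.
move=> mA mB mC; apply: measureU; [exact: measurableI | |].
- by apply: measurableI => //; exact: measurableC.
- by apply/seteqP; split=> t // [[At _] []].
Qed.

Lemma le_measure_setCI d (T : measurableType d) (R : realType)
    (mu : {finite_measure set T -> \bar R}) (A E1 E2 D : set T) :
  measurable A -> measurable E1 -> measurable E2 -> measurable D ->
  E2 `<=` E1 `|` D -> (mu E1 <= mu E2)%E ->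
  (mu (~` A `&` E1) <= mu (A `&` D) + mu (~` A `&` E2))%E.
Proof.
move=> mA mE1 mE2 mD E2sub le12.
have mIA E : measurable E -> measurable (E `&` A) by move=> mE; exact: measurableI.
have onA : (mu (E2 `&` A) <= mu (E1 `&` A) + mu (A `&` D))%E.
  apply: le_trans (measureU2 _ (mIA _ mE1) (measurableI _ _ mA mD)).
  apply: le_measure; rewrite ?inE; [exact: mIA | |].
  - by apply: measurableU; [exact: mIA | exact: measurableI].
  by move=> t [/E2sub [E1t | Dt] At]; [left | right].
have setCI_setD E : ~` A `&` E = E `\` A by rewrite setDE setIC.
rewrite -(@leeD2rE _ (mu (E1 `&` A))); last exact: fin_num_measure (mIA _ mE1).
rewrite !setCI_setD -measureDI //; apply: le_trans le12 _.
rewrite (measureDI mu mE2 mA).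
apply: le_trans (leeD2l _ onA) _.
by rewrite addeA addeC addeA.
Qed.

Section Relabel.
Variables (X : Type) (G : set (X -> bool)) (fstar : X -> bool).
Hypothesis Gfstar : G fstar.

Lemma relabel_AGR x y : AGR G x -> relabel G (x, y) = (x, fstar x).
Proof.
move=> Ax; rewrite /relabel asboolT /=; last by split => //; exists fstar.
congr pair; apply: xget_unique; first by exists fstar.
by move=> b [f Gf <-]; exact: Ax.
Qed.

Lemma relabel_notAGR z : ~ AGR G z.1 -> relabel G z = z.
Proof. by move=> nAz; rewrite /relabel asboolF // => -[]. Qed.

Lemma preimage_relabel_error_set f :
  relabel G @^-1` error_set f =
  ([set z | AGR G z.1] `&` [set z | f z.1 != fstar z.1]) `|`
  (~` [set z | AGR G z.1] `&` error_set f).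
Proof.
apply/seteqP; split=> -[x y] /=.
- have [Ax|nAx] := pselect (AGR G x).
    by rewrite relabel_AGR //; left.
  by rewrite relabel_notAGR //; right.
- case=> -[Ax].
    by rewrite /error_set /= relabel_AGR.
  by rewrite /error_set /= relabel_notAGR.
Qed.

End Relabel.

Lemma measurable_preimage_fst d d' (X : measurableType d)
    (Y : measurableType d') (A : set X) :
  measurable A -> measurable [set z : X * Y | A z.1].
Proof. by move=> mA; rewrite -[X in measurable X]setTI; exact: measurable_fst. Qed.

Lemma measurable_neq_fst d d' (X : measurableType d) (Y : measurableType d')
    (f g : X -> bool) :
  measurable_fun setT f -> measurable_fun setT g ->
  measurable [set z : X * Y | f z.1 != g z.1].
Proof.
by move=> mf mg; apply: measurable_neq; apply: measurableT_comp measurable_fst.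
Qed.

Lemma measurable_error_set d (X : measurableType d) (f : X -> bool) :
  measurable_fun setT f -> measurable (error_set f).
Proof.
by move=> mf; apply: measurable_neq measurable_snd; exact: measurableT_comp.
Qed.

Lemma risk_relabel_dist d (X : measurableType d) (R : realType)
    (P : probability (X * bool)%type R) (G : set (X -> bool))
    (fstar f : X -> bool) :
  G fstar -> measurable (AGR G) ->
  measurable_fun setT fstar -> measurable_fun setT f ->
  risk (relabel_dist P G) f =
  (P ([set z | AGR G z.1] `&` [set z | f z.1 != fstar z.1]) +
   P (~` [set z | AGR G z.1] `&` error_set f))%E.
Proof.
move=> Gfstar mAGR mfstar mf.
rewrite /risk /relabel_dist -/(error_set f) (preimage_relabel_error_set Gfstar).
apply: measure_setICU; first exact: measurable_preimage_fst.
- exact: measurable_neq_fst.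
- exact: measurable_error_set.
Qed.

Theorem lemma10 (d : measure_display) (X : measurableType d) (R : realType)
  (F : set (X -> bool)) (P : probability (X * bool)%type R)
  (G : set (X -> bool)) (fstar : X -> bool) :
  (forall f, F f -> measurable_fun setT f) ->
  measurable (AGR G) ->
  G `<=` F ->
  risk_minimizer (fun A => P A) F fstar ->
  G fstar ->
  risk_minimizer (relabel_dist P G) F fstar.
Proof.
move=> mF mAGR _ [Ffstar fstar_min] Gfstar; split=> // g Fg.
have [mfstar mg] := (mF _ Ffstar, mF _ Fg).
rewrite !(risk_relabel_dist P Gfstar) //.
have -> : [set z : X * bool | fstar z.1 != fstar z.1] = set0.
  by apply/seteqP; split=> z // /eqP.
rewrite setI0 measure0 add0e.
apply: le_measure_setCI (fstar_min g Fg).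
- exact: measurable_preimage_fst.
- exact: measurable_error_set.
- exact: measurable_error_set.
- exact: measurable_neq_fst.
move=> z gErr; have [eq_gf|] := eqVneq (g z.1) (fstar z.1); last by right.
by left; rewrite /error_set /= -eq_gf.
Qed.
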